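(* Let $\lambda\in[0,\frac{\pi}{2})$ and let $(|B(\lambda)\rangle,\mathcal{M})$ be a maximally impossible quantum scenario with $|M_1|=|M_2|=N$ and $M_3=\{C_0,\dots,C_{n-1}\}$. Then for all $l,l_1,l_2\in\{0,\dots,n-1\}$, $\delta(\lambda,C_l)$ and $\beta(\lambda,C_{l_1})-\beta(\lambda,C_{l_2})$ are congruent modulo $2\pi$ to integer multiples of $\frac{\pi}{N}$.
   Context: For $\varphi\in\mathbb{R}$, $E_\varphi=\cos\varphi X+\sin\varphi Y$ is the equatorial measurement, with $+1$ eigenvector $|\varphi\rangle=\frac{1}{\sqrt2}(|0\rangle+e^{i\varphi}|1\rangle)$ and $-1$ eigenvector $|\varphi+\pi\rangle$; outcomes $+1,-1$ relabelled $0,1$; measurements identified with angles. A measurement scenario $\mathcal{M}=(M_1,M_2,M_3)$ consists of finite nonempty sets $M_i\subseteq[0,\pi)$ of angles for qubit $i$. For a three-qubit state $|\psi\rangle$, the event $(A,B,C)\to(a,b,c)$ with $(A,B,C)\in M_1\times M_2\times M_3$ is impossible if $(\langle A+a\pi|\otimes\langle B+b\pi|\otimes\langle C+c\pi|)|\psi\rangle=0$. For $\lambda\in[0,\frac{\pi}{2})$, $|v_\lambda\rangle=\cos\frac{\lambda}{2}|0\rangle+\sin\frac{\lambda}{2}|1\rangle$, $|w_\lambda\rangle=\sin\frac{\lambda}{2}|0\rangle+\cos\frac{\lambda}{2}|1\rangle$, and the interpolant state is $|B(\lambda)\rangle=\frac{1}{\sqrt2}(|00\rangle|v_\lambda\rangle+|11\rangle|w_\lambda\rangle)$.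 $(|B(\lambda)\rangle,\mathcal{M})$ is maximally impossible if for every $C\in M_3$ and $z\in\{0,1\}$: every $A\in M_1$ admits $B\in M_2$, $a,b\in\{0,1\}$ with $(A,B,C)\to(a,b,z)$ impossible, and every $B\in M_2$ admits $A\in M_1$, $a,b$ with $(A,B,C)\to(a,b,z)$ impossible. Define modulo $2\pi$: $\beta(\lambda,\varphi)=\varphi-2\arctan\left(\frac{\cos\frac{\lambda}{2}\sin\varphi}{\sin\frac{\lambda}{2}+\cos\frac{\lambda}{2}\cos\varphi}\right)$ and $\delta(\lambda,\varphi)=\beta(\lambda,\varphi+\pi)-\beta(\lambda,\varphi)$. *)

From Stdlib Require Import Reals ZArith List.
From Coquelicot Require Import Coquelicot.
Open Scope R_scope.

Definition cexpi (t : R) : C := (cos t, sin t).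

(* A three-qubit state, given by its amplitudes on |x y z>, false = 0, true = 1. *)
Definition state3 := bool -> bool -> bool -> C.

(* <phi| applied to the basis ket |x>, where
   |phi> = 1/sqrt2 (|0> + e^{i phi} |1>) *)
Definition eq_bra (phi : R) (x : bool) : C :=
  if x then Cmult (RtoC (/ sqrt 2)) (cexpi (- phi)) else RtoC (/ sqrt 2).

(* outcome bit a : false = outcome 0 (eigenvalue +1), true = outcome 1 *)
Definition bit (a : bool) : R := if a then 1 else 0.

Definition sumb (f : bool -> C) : C := Cplus (f false) (f true).

(* (<A + a pi| (x) <B + b pi| (x) <C + c pi|) |psi> *)
Definition amplitude (psi : state3) (A B Cm : R) (a b c : bool) : C :=
  sumb (fun x => sumb (fun y => sumb (fun z =>
    Cmult (Cmult (eq_bra (A + bit a * PI) x) (eq_bra (B + bit b * PI) y))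
          (Cmult (eq_bra (Cm + bit c * PI) z) (psi x y z))))).

Definition impossible (psi : state3) (A B Cm : R) (a b c : bool) : Prop :=
  amplitude psi A B Cm a b c = RtoC 0.

Definition v_lam (lam : R) (z : bool) : R :=
  if z then sin (lam / 2) else cos (lam / 2).
Definition w_lam (lam : R) (z : bool) : R :=
  if z then cos (lam / 2) else sin (lam / 2).

Definition B_state (lam : R) : state3 := fun x y z =>
  match x, y with
  | false, false => RtoC (/ sqrt 2 * v_lam lam z)
  | true, true => RtoC (/ sqrt 2 * w_lam lam z)
  | _, _ => RtoC 0
  end.

(* A finite nonempty set of angles in [0, pi), represented as a duplicate-free list. *)
Definition angle_set (M : list R) : Prop :=
  M <> nil /\ NoDup M /\ (forall x, In x M -> 0 <= x < PI).

Definition maximally_impossible (psi : state3) (M1 M2 M3 : list R) : Prop :=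
  forall Cm z, In Cm M3 ->
    (forall A, In A M1 -> exists B a b, In B M2 /\ impossible psi A B Cm a b z) /\
    (forall B, In B M2 -> exists A a b, In A M1 /\ impossible psi A B Cm a b z).

(* beta(lambda, phi) = phi - 2 arctan(y/x), a real representative of a class mod 2 pi;
   when x = 0 (then y <> 0) we use the value pi, the common limit mod 2 pi
   of 2 arctan(y/x) (equivalently 2 arg(x + i y) mod 2 pi). *)
Definition beta (lam phi : R) : R :=
  let y := cos (lam / 2) * sin phi in
  let x := sin (lam / 2) + cos (lam / 2) * cos phi in
  phi - (if Req_EM_T x 0 then PI else 2 * atan (y / x)).

Definition delta (lam phi : R) : R := beta lam (phi + PI) - beta lam phi.

Definition cong_mod_2pi (x y : R) : Prop := exists m : Z, x = y + 2 * PI * IZR m.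

Definition mult_pi_over (N : nat) (x : R) : Prop :=
  exists k : Z, cong_mod_2pi x (IZR k * (PI / INR N)).

(* An impossible event (A,B,C) -> (a,b,z) for |B(lambda)> forces
   A + B = beta(lambda, C + z pi) mod pi.  By maximal impossibility every
   A in M1 is paired in this way with some B in M2; as the angles are
   distinct representatives mod pi, the pairing is a bijection M1 -> M2, so
   sum M1 + sum M2 = N beta(lambda, C + z pi) mod pi for every C and z.  The
   left-hand side does not depend on (C, z), hence any two of these N beta
   values differ by a multiple of pi, which is the claim. *)
From Stdlib Require Import Reals ZArith List Lra Lia.
From Coquelicot Require Import Coquelicot.
Open Scope R_scope.

Definition cong_mod_pi (x y : R) : Prop := exists k : Z, x = y + IZR k * PI.

Definition twice_arg (x y : R) : R :=
  if Req_EM_T x 0 then PI else 2 * atan (y / x).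

Lemma beta_twice_arg (lam phi : R) :
  beta lam phi =
  phi - twice_arg (sin (lam / 2) + cos (lam / 2) * cos phi) (cos (lam / 2) * sin phi).
Proof. reflexivity. Qed.

Lemma bit_IZR (a : bool) : bit a = IZR (Z.b2z a).
Proof. now destruct a. Qed.

Lemma sin_lt_cos (a : R) : 0 <= a < PI / 4 -> sin a < cos a.
Proof.
intros Ha.
assert (Hc : 0 < cos a) by (apply cos_gt_0; lra).
assert (Ht : tan a < 1).
{ rewrite <- tan_PI4. apply tan_increasing_1; lra. }
unfold tan in Ht. apply Rmult_lt_compat_r with (r := cos a) in Ht; [|exact Hc].
field_simplify in Ht; lra.
Qed.

Lemma cong_mod_pi_eq (x y : R) :
  0 <= x < PI -> 0 <= y < PI -> cong_mod_pi x y -> x = y.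
Proof.
intros Hx Hy [k Hk]. assert (HP := PI_RGT_0).
assert (Hk1 : -1 < IZR k < 1) by (split; nra).
destruct Hk1 as [L U]. apply lt_IZR in L, U.
replace k with 0%Z in Hk by lia. lra.
Qed.

Section Amplitude.

Variables (lam A B Cm : R) (a b z : bool).

Let c := cos (lam / 2).
Let s := sin (lam / 2).
Let theta := A + bit a * PI + (B + bit b * PI).
Let gamma := Cm + bit z * PI.

(* Up to the factor (1/sqrt 2)^4 and complex conjugation, the amplitude is
   (c + s e^{i gamma}) + e^{i theta} (s + c e^{i gamma}). *)
Lemma impossible_B_state_equations :
  impossible (B_state lam) A B Cm a b z ->
  c + s * cos gamma + s * cos theta + c * cos (theta + gamma) = 0 /\
  s * sin gamma + s * sin theta + c * sin (theta + gamma) = 0.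
Proof.
unfold impossible. intros Hi.
set (r := / sqrt 2).
assert (Hr : r * r * r * r <> 0).
{ assert (0 < r) by (apply Rinv_0_lt_compat, sqrt_lt_R0; lra).
  apply Rgt_not_eq. repeat apply Rmult_lt_0_compat; lra. }
assert (Hre : fst (amplitude (B_state lam) A B Cm a b z) =
   r * r * r * r * (c + s * cos gamma + s * cos theta + c * cos (theta + gamma))).
{ unfold amplitude, sumb, eq_bra, B_state, cexpi, v_lam, w_lam, theta, gamma, c, s.
  simpl; fold r.
  rewrite ?cos_plus, ?sin_plus, ?cos_neg, ?sin_neg, ?cos_plus, ?sin_plus. ring. }
assert (Him : snd (amplitude (B_state lam) A B Cm a b z) =
   - (r * r * r * r) * (s * sin gamma + s * sin theta + c * sin (theta + gamma))).
{ unfold amplitude, sumb, eq_bra, B_state, cexpi, v_lam, w_lam, theta, gamma, c, s.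
  simpl; fold r.
  rewrite ?cos_plus, ?sin_plus, ?cos_neg, ?sin_neg, ?cos_plus, ?sin_plus. ring. }
rewrite Hi in Hre, Him. simpl in Hre, Him.
split; apply (Rmult_eq_reg_l (r * r * r * r)); auto; lra.
Qed.

End Amplitude.

(* With w = x + i y = s + c e^{i g}, the hypotheses say e^{i g} conj w = - e^{i al} w,
   i.e. e^{i (g - al)} = - w^2 / |w|^2; the conclusion is the imaginary part of
   e^{i (g - al)} conj(w)^2 = - |w|^2. *)
Lemma vanishing_amplitude_angle (c s g al : R) :
  c + s * cos g + s * cos al + c * cos (al + g) = 0 ->
  s * sin g + s * sin al + c * sin (al + g) = 0 ->
  let x := s + c * cos g in let y := c * sin g in
  sin (g - al) * (x * x - y * y) - 2 * x * y * cos (g - al) = 0.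
Proof.
intros Re Im x y.
rewrite cos_plus in Re. rewrite sin_plus in Im. rewrite sin_minus, cos_minus.
assert (P := sin2_cos2 g). unfold Rsqr in P.
set (cp := cos g * cos al + sin g * sin al). set (sp := sin g * cos al - cos g * sin al).
assert (HX : x * (1 + cp) + y * sp = 0).
{ transitivity ((c + s * cos g + s * cos al + c * (cos al * cos g - sin al * sin g)) * cos g
     + (s * sin g + s * sin al + c * (sin al * cos g + cos al * sin g)) * sin g
     - s * (sin g * sin g + cos g * cos g - 1)).
  - unfold x, y, cp, sp; ring.
  - rewrite Re, Im, P; ring. }
assert (HY : y * (1 - cp) + x * sp = 0).
{ transitivity ((c + s * cos g + s * cos al + c * (cos al * cos g - sin al * sin g)) * sin g
     - (s * sin g + s * sin al + c * (sin al * cos g + cos al * sin g)) * cos g).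
  - unfold x, y, cp, sp; ring.
  - rewrite Re, Im; ring. }
transitivity (x * (y * (1 - cp) + x * sp) - y * (x * (1 + cp) + y * sp)).
- unfold cp, sp; ring.
- rewrite HX, HY; ring.
Qed.

Lemma sin_sub_twice_arg (x y p : R) :
  0 < x * x + y * y ->
  sin p * (x * x - y * y) - 2 * x * y * cos p = 0 ->
  sin (p - twice_arg x y) = 0.
Proof.
intros Hw E. unfold twice_arg. destruct (Req_EM_T x 0) as [H0|H0].
- rewrite sin_minus, cos_PI, sin_PI. subst x.
  assert (Hsp : sin p * (y * y) = 0) by lra.
  apply Rmult_integral in Hsp as [Hsp|Hsp]; [rewrite Hsp; ring | lra].
- set (t := atan (y / x)).
  assert (Hc : 0 < cos t) by (apply cos_gt_0; unfold t; destruct (atan_bound (y / x)); lra).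
  assert (Ht : sin t = y / x * cos t).
  { rewrite <- (tan_atan (y / x)). fold t. unfold tan. field. lra. }
  rewrite sin_minus, cos_2a, sin_2a, Ht.
  transitivity (cos t * cos t / (x * x) * (sin p * (x * x - y * y) - 2 * x * y * cos p)).
  + field. exact H0.
  + rewrite E. ring.
Qed.

(* |s + c e^{i g}| >= c - s > 0 because lam / 2 < pi / 4. *)
Lemma B_weight_pos (lam g : R) : 0 <= lam < PI / 2 ->
  let x := sin (lam / 2) + cos (lam / 2) * cos g in let y := cos (lam / 2) * sin g in
  0 < x * x + y * y.
Proof.
intros Hl x y.
assert (Hs : 0 <= sin (lam / 2)) by (apply sin_ge_0; lra).
assert (Hsc : sin (lam / 2) < cos (lam / 2)) by (apply sin_lt_cos; lra).
assert (P := sin2_cos2 g). unfold Rsqr in P.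
assert (Hcg := COS_bound g).
assert (E : x * x + y * y = sin (lam / 2) * sin (lam / 2) + cos (lam / 2) * cos (lam / 2)
          + 2 * sin (lam / 2) * cos (lam / 2) * cos g).
{ unfold x, y. transitivity (sin (lam / 2) * sin (lam / 2)
     + cos (lam / 2) * cos (lam / 2) * (sin g * sin g + cos g * cos g)
     + 2 * sin (lam / 2) * cos (lam / 2) * cos g); [ring | rewrite P; ring]. }
assert (Hsc2 : 0 < (cos (lam / 2) - sin (lam / 2)) * (cos (lam / 2) - sin (lam / 2))) by nra.
assert (0 <= sin (lam / 2) * cos (lam / 2) * (cos g + 1)) by
  (apply Rmult_le_pos; [apply Rmult_le_pos|]; lra).
rewrite E. nra.
Qed.

Lemma impossible_B_state_cong (lam A B Cm : R) (a b z : bool) : 0 <= lam < PI / 2 ->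
  impossible (B_state lam) A B Cm a b z ->
  cong_mod_pi (A + B) (beta lam (Cm + bit z * PI)).
Proof.
intros Hl Hi.
destruct (impossible_B_state_equations _ _ _ _ _ _ _ Hi) as [Re Im].
set (gamma := Cm + bit z * PI) in *.
assert (Hsin := sin_sub_twice_arg _ _ _ (B_weight_pos lam gamma Hl)
                  (vanishing_amplitude_angle _ _ _ _ Re Im)).
destruct (sin_eq_0_0 _ Hsin) as [k Hk].
exists (- k - Z.b2z a - Z.b2z b)%Z.
rewrite beta_twice_arg. rewrite !minus_IZR, opp_IZR, <- !bit_IZR. lra.
Qed.

Definition sumR (l : list R) : R := fold_right Rplus 0 l.

Lemma sumR_app (l1 l2 : list R) : sumR (l1 ++ l2) = sumR l1 + sumR l2.
Proof. induction l1 as [|x l1 IH]; simpl; [ring | rewrite IH; ring]. Qed.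

(* Since the angles of M1 are distinct mod pi, the partners of distinct elements
   of M1 are distinct, so the pairing exhausts M2. *)
Lemma sumR_paired_cong (M1 : list R) : forall (M2 : list R) (t : R),
  NoDup M1 -> NoDup M2 -> (forall x, In x M1 -> 0 <= x < PI) ->
  length M1 = length M2 ->
  (forall A, In A M1 -> exists B, In B M2 /\ cong_mod_pi (A + B) t) ->
  cong_mod_pi (sumR M1 + sumR M2) (INR (length M1) * t).
Proof.
induction M1 as [|A M1 IH]; intros M2 t N1 N2 R1 L H.
- destruct M2; [|discriminate]. exists 0%Z. simpl. ring.
- destruct (H A (or_introl eq_refl)) as [B [HB [k Hk]]].
  destruct (in_split _ _ HB) as [l1 [l2 ->]].
  inversion N1 as [|? ? HA N1']; subst.
  destruct (IH (l1 ++ l2) t N1' (NoDup_remove_1 _ _ _ N2)) as [m Hm].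
  + intros x Hx. apply R1. now right.
  + simpl in L. rewrite !length_app in *. simpl in L. lia.
  + intros A' HA'. destruct (H A' (or_intror HA')) as [B' [HB' [k' Hk']]].
    exists B'. split; [|now exists k'].
    apply in_app_iff in HB'. simpl in HB'.
    destruct HB' as [?|[<-|?]]; try (apply in_app_iff; tauto).
    exfalso. apply HA.
    replace A with A'; [exact HA'|].
    apply cong_mod_pi_eq; [apply R1; now right | apply R1; now left |].
    exists (k' - k)%Z. rewrite minus_IZR. lra.
  + exists (m + k)%Z. rewrite sumR_app in *. simpl sumR. simpl length.
    rewrite S_INR, plus_IZR. lra.
Qed.

Lemma mult_pi_over_of_cong (N : nat) (S u v : R) :
  INR N <> 0 -> cong_mod_pi S (INR N * u) -> cong_mod_pi S (INR N * v) ->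
  mult_pi_over N (u - v).
Proof.
intros HN [m1 E1] [m2 E2]. exists (m2 - m1)%Z, 0%Z. rewrite minus_IZR.
apply (Rmult_eq_reg_l (INR N)); auto. field_simplify; auto. lra.
Qed.

Lemma maximally_impossible_sumR_cong
  (lam : R) (M1 M2 M3 : list R) (Cm : R) (z : bool) :
  0 <= lam < PI / 2 ->
  NoDup M1 -> NoDup M2 -> (forall x, In x M1 -> 0 <= x < PI) ->
  length M1 = length M2 ->
  maximally_impossible (B_state lam) M1 M2 M3 -> In Cm M3 ->
  cong_mod_pi (sumR M1 + sumR M2) (INR (length M1) * beta lam (Cm + bit z * PI)).
Proof.
intros Hl N1 N2 R1 L MI HC. apply sumR_paired_cong; auto.
intros A HA. destruct (proj1 (MI Cm z HC) A HA) as [B [a [b [HB Hi]]]].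
exists B. split; [exact HB | exact (impossible_B_state_cong _ _ _ _ _ _ _ Hl Hi)].
Qed.

Theorem lemma14 (lam : R) (M1 M2 M3 : list R) (N : nat) :
  0 <= lam < PI / 2 ->
  angle_set M1 -> angle_set M2 -> angle_set M3 ->
  length M1 = N -> length M2 = N ->
  maximally_impossible (B_state lam) M1 M2 M3 ->
  (forall Cl, In Cl M3 -> mult_pi_over N (delta lam Cl)) /\
  (forall C1 C2, In C1 M3 -> In C2 M3 ->
     mult_pi_over N (beta lam C1 - beta lam C2)).
Proof.
intros Hl [Ne1 [N1 R1]] [_ [N2 _]] _ L1 L2 MI.
assert (HN : INR N <> 0).
{ apply not_0_INR. intros ->. destruct M1; [congruence | discriminate]. }
assert (Hsum : forall Cm z, In Cm M3 ->
          cong_mod_pi (sumR M1 + sumR M2) (INR N * beta lam (Cm + bit z * PI))).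
{ intros Cm z HC. rewrite <- L1.
  apply maximally_impossible_sumR_cong with M3; auto. congruence. }
assert (Hsum0 : forall Cm, In Cm M3 ->
          cong_mod_pi (sumR M1 + sumR M2) (INR N * beta lam Cm)).
{ intros Cm HC. generalize (Hsum Cm false HC). simpl bit. now rewrite Rmult_0_l, Rplus_0_r. }
assert (Hsum1 : forall Cm, In Cm M3 ->
          cong_mod_pi (sumR M1 + sumR M2) (INR N * beta lam (Cm + PI))).
{ intros Cm HC. generalize (Hsum Cm true HC). simpl bit. now rewrite Rmult_1_l. }
split.
- intros Cl HC. exact (mult_pi_over_of_cong _ _ _ _ HN (Hsum1 Cl HC) (Hsum0 Cl HC)).
- intros C1 C2 H1 H2. exact (mult_pi_over_of_cong _ _ _ _ HN (Hsum0 C1 H1) (Hsum0 C2 H2)).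
Qed.
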